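(* If $\mathscr{F}=(\Omega,\sqsubseteq,\mathcal{E},\mathcal{A},\mathcal{K},\mathcal{B})$ is an epistemic possibility frame, then $\mathscr{F}^+=((\mathcal{E},\subseteq),\mathbf{A},\mathbf{K},\mathbf{B})$ is an epistemic awareness algebra.
   Context: For a poset $(\Omega,\sqsubseteq)$, let $\downarrow E=\{\omega\mid \omega\sqsubseteq\nu\text{ for some }\nu\in E\}$, $\downarrow\nu=\downarrow\{\nu\}$, $\rho(E)=\{\omega\mid \forall\omega'\sqsubseteq\omega\ \exists\omega''\sqsubseteq\omega'\colon \omega''\in\downarrow E\}$; $\mathcal{RO}(\Omega,\sqsubseteq)=\{E\mid\rho(E)=E\}$, a Boolean algebra under $\subseteq$ with meet $\cap$, join $E\sqcup F=\rho(E\cup F)$, complement $\neg E=\{\omega\mid\forall\omega'\sqsubseteq\omega,\ \omega'\notin E\}$. $\max(E)=\{\omega\in E\mid\text{no }\nu\in E\text{ with }\omega\sqsubseteq\nu,\ \nu\not\sqsubseteq\omega\}$. A possibility frame $(\Omega,\sqsubseteq,\mathcal{E})$ has $\mathcal{E}\subseteq\mathcal{RO}(\Omega,\sqsubseteq)$ nonempty, closed under binary $\cap$ and $\neg$; quasi-principal means: for all $E\in\mathcal{E}$, $\omega\in E$, $\omega\in\downarrow\max(E)$. A possibility frame with awareness $(\Omega,\sqsubseteq,\mathcal{E},\mathcal{A})$: $(\Omega,\sqsubseteq,\mathcal{E})$ quasi-principal with maximum element $m$; $\mathcal{A}:\Omega\to\wp(\Omega)$ with, for all $\omega,\omega',\nu$: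 $m\in\mathcal{A}(\omega)$; $\nu\in\mathcal{A}(\omega)\Rightarrow\downarrow\nu\in\mathcal{E}$; $\omega'\sqsubseteq\omega\Rightarrow\mathcal{A}(\omega)\subseteq\mathcal{A}(\omega')$; $\nu\notin\mathcal{A}(\omega)\Rightarrow\exists\omega'\sqsubseteq\omega\ \forall\omega''\sqsubseteq\omega'\ \nu\notin\mathcal{A}(\omega'')$; if $\nu\in\mathcal{A}(\omega)$, $E,E'\in\mathcal{E}$ and $\max(E\cap\downarrow\nu)\cup\max(E'\cap\downarrow\nu)\subseteq\mathcal{A}(\omega)$ then $\max((E\sqcup E')\cap\downarrow\nu)\subseteq\mathcal{A}(\omega)$; and $\mathcal{E}$ is closed under $\mathbf{A}$, where $\omega\in\mathbf{A}(E)$ iff $\forall\omega'\sqsubseteq\omega\ \forall\nu\in\mathcal{A}(\omega')$: $\max(E\cap\downarrow\nu)\cup\max(\neg E\cap\downarrow\nu)\subseteq\mathcal{A}(\omega')$. An epistemic possibility frame $(\Omega,\sqsubseteq,\mathcal{E},\mathcal{A},\mathcal{K},\mathcal{B})$ adds $\mathcal{K},\mathcal{B}:\Omega\to\wp(\Omega)$ such that for $\mathcal{R}\in\{\mathcal{K},\mathcal{B}\}$: $\omega'\sqsubseteq\omega\Rightarrow\mathcal{R}(\omega')\subseteq\mathcal{R}(\omega)$; $\mathcal{R}(\omega)\in\mathcal{RO}(\Omega,\sqsubseteq)$; $\nu\in\mathcal{R}(\omega)\Rightarrow\exists\omega'\sqsubseteq\omega\ \forall\omega''\sqsubseteq\omega'\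 \exists\nu'\sqsubseteq\nu\colon\nu'\in\mathcal{R}(\omega'')$; $\omega\in\mathcal{K}(\omega)$; $\mathcal{B}(\omega)\neq\varnothing$; $\mathcal{B}(\omega)\subseteq\mathcal{K}(\omega)$; and $\{\omega\mid\mathcal{R}(\omega)\subseteq E\}\in\mathcal{E}$ for $E\in\mathcal{E}$. Define $\mathbf{K}(E)=\{\omega\mid\mathcal{K}(\omega)\subseteq E,\ \omega\in\mathbf{A}(E)\}$, $\mathbf{B}(E)=\{\omega\mid\mathcal{B}(\omega)\subseteq E,\ \omega\in\mathbf{A}(E)\}$. An epistemic awareness algebra is $(\mathbb{B},A,K,B)$, $\mathbb{B}$ a Boolean algebra, $A,K,B$ unary operations such that for all $a,b$ and $\Box\in\{K,B\}$: $A1=1$; $Aa=A\neg a$; $Aa\sqcap Ab\le A(a\sqcap b)$; $K1=1$; $\Box a\sqcap\Box b\le\Box(a\sqcap b)$; if $a\le b$ then $\Box a\sqcap Ab\le\Box b$; $Ka\le a$; $B0=0$; $Ka\le Ba$; $Ba\le Aa$. *)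

Set Implicit Arguments.

Section PossDefs.
Variable Omega : Type.
Variable le : Omega -> Omega -> Prop.

Definition pset := Omega -> Prop.

Definition subset (E F : pset) : Prop := forall w, E w -> F w.
Definition inter (E F : pset) : pset := fun w => E w /\ F w.
Definition union (E F : pset) : pset := fun w => E w \/ F w.
Definition emptyset : pset := fun _ => False.
Definition fullset : pset := fun _ => True.

Definition down (E : pset) : pset := fun w => exists v, E v /\ le w v.
Definition down1 (v : Omega) : pset := down (fun u => u = v).

Definition rho (E : pset) : pset :=
  fun w => forall w', le w' w -> exists w'', le w'' w' /\ down E w''.

Definition RO (E : pset) : Prop := forall w, rho E w <-> E w.

Definition negs (E : pset) : pset := fun w => forall w', le w' w -> ~ E w'.
Definition joins (E F : pset) : pset := rho (union E F).

Definition maxs (E : pset) : pset :=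
  fun w => E w /\ ~ (exists v, E v /\ le w v /\ ~ le v w).

Definition poset : Prop :=
  (forall w, le w w) /\
  (forall u v w, le u v -> le v w -> le u w) /\
  (forall u v, le u v -> le v u -> u = v).

Definition possibility_frame (Ecal : pset -> Prop) : Prop :=
  poset /\
  (forall E, Ecal E -> RO E) /\
  (exists E, Ecal E) /\
  (forall E F, Ecal E -> Ecal F -> Ecal (inter E F)) /\
  (forall E, Ecal E -> Ecal (negs E)).

Definition quasi_principal (Ecal : pset -> Prop) : Prop :=
  forall E w, Ecal E -> E w -> down (maxs E) w.

(* Awareness: Acal w v  means  v ∈ 𝒜(w) *)
Definition boldA (Acal : Omega -> Omega -> Prop) (E : pset) : pset :=
  fun w => forall w', le w' w -> forall v, Acal w' v ->
    forall u, union (maxs (inter E (down1 v))) (maxs (inter (negs E) (down1 v))) u ->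
      Acal w' u.

Definition awareness_frame (Ecal : pset -> Prop) (Acal : Omega -> Omega -> Prop) : Prop :=
  possibility_frame Ecal /\ quasi_principal Ecal /\
  (exists m, (forall w, le w m) /\
     (forall w, Acal w m)) /\
  (forall w v, Acal w v -> Ecal (down1 v)) /\
  (forall w w', le w' w -> forall v, Acal w v -> Acal w' v) /\
  (forall w v, ~ Acal w v ->
     exists w', le w' w /\ forall w'', le w'' w' -> ~ Acal w'' v) /\
  (forall w v E E', Acal w v -> Ecal E -> Ecal E' ->
     (forall u, union (maxs (inter E (down1 v))) (maxs (inter E' (down1 v))) u -> Acal w u) ->
     (forall u, maxs (inter (joins E E') (down1 v)) u -> Acal w u)) /\
  (forall E, Ecal E -> Ecal (boldA Acal E)).

(* conditions on an accessibility map R : Omega -> pset (R w u means u ∈ R(w)) *)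
Definition accessibility_ok (Ecal : pset -> Prop) (R : Omega -> Omega -> Prop) : Prop :=
  (forall w w', le w' w -> subset (R w') (R w)) /\
  (forall w, RO (R w)) /\
  (forall w v, R w v -> exists w', le w' w /\
      forall w'', le w'' w' -> exists v', le v' v /\ R w'' v') /\
  (forall E, Ecal E -> Ecal (fun w => subset (R w) E)).

Definition epistemic_frame (Ecal : pset -> Prop) (Acal Kc Bc : Omega -> Omega -> Prop) : Prop :=
  awareness_frame Ecal Acal /\
  accessibility_ok Ecal Kc /\ accessibility_ok Ecal Bc /\
  (forall w, Kc w w) /\
  (forall w, exists u, Bc w u) /\
  (forall w, subset (Bc w) (Kc w)).

Definition boldK (Acal Kc : Omega -> Omega -> Prop) (E : pset) : pset :=
  fun w => subset (Kc w) E /\ boldA Acal E w.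
Definition boldB (Acal Bc : Omega -> Omega -> Prop) (E : pset) : pset :=
  fun w => subset (Bc w) E /\ boldA Acal E w.

End PossDefs.

Definition boolean_algebra_on (X : Type) (C : X -> Prop) (le : X -> X -> Prop)
  (meet join : X -> X -> X) (neg : X -> X) (bot top : X) : Prop :=
  C bot /\ C top /\
  (forall a b, C a -> C b -> C (meet a b)) /\
  (forall a b, C a -> C b -> C (join a b)) /\
  (forall a, C a -> C (neg a)) /\
  (forall a, C a -> le a a) /\
  (forall a b c, C a -> C b -> C c -> le a b -> le b c -> le a c) /\
  (forall a b, C a -> C b -> le a b -> le b a -> a = b) /\
  (forall a b, C a -> C b -> le (meet a b) a /\ le (meet a b) b) /\
  (forall a b c, C a -> C b -> C c -> le c a -> le c b -> le c (meet a b)) /\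
  (forall a b, C a -> C b -> le a (join a b) /\ le b (join a b)) /\
  (forall a b c, C a -> C b -> C c -> le a c -> le b c -> le (join a b) c) /\
  (forall a, C a -> le bot a /\ le a top) /\
  (forall a b c, C a -> C b -> C c -> meet a (join b c) = join (meet a b) (meet a c)) /\
  (forall a, C a -> meet a (neg a) = bot /\ join a (neg a) = top).

Definition epistemic_awareness_algebra_on (X : Type) (C : X -> Prop) (le : X -> X -> Prop)
  (meet join : X -> X -> X) (neg : X -> X) (bot top : X) (A K B : X -> X) : Prop :=
  boolean_algebra_on C le meet join neg bot top /\
  (forall a, C a -> C (A a) /\ C (K a) /\ C (B a)) /\
  A top = top /\
  (forall a, C a -> A a = A (neg a)) /\
  (forall a b, C a -> C b -> le (meet (A a) (A b)) (A (meet a b))) /\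
  K top = top /\
  (forall Box, (Box = K \/ Box = B) ->
     (forall a b, C a -> C b -> le (meet (Box a) (Box b)) (Box (meet a b))) /\
     (forall a b, C a -> C b -> le a b -> le (meet (Box a) (A b)) (Box b))) /\
  (forall a, C a -> le (K a) a) /\
  B bot = bot /\
  (forall a, C a -> le (K a) (B a)) /\
  (forall a, C a -> le (B a) (A a)).

(* The events of a possibility frame form a Boolean subalgebra of the regular
   open sets RO(Omega): ~E is the pseudo-complement, ~~E = rho(E) for
   down-closed E (classically), and the join is E |_| F = ~(~E /\ ~F).
   The only non-routine axiom is A E /\ A F <= A (E /\ F).  Being aware of
   E /\ F at v requires awareness of the maximal points below v of E /\ F
   and of ~(E /\ F) = ~E |_| ~F.  The latter are covered by the join axiom
   for awareness.  For the former, quasi-principality puts such a point u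
   under a maximal point v' of E below v; awareness of E makes v' aware, and
   u is maximal in F below v', so awareness of F makes u aware.  The modal
   axioms follow pointwise from the conditions on K and B. *)

From Stdlib Require Import Classical FunctionalExtensionality PropExtensionality.

Set Implicit Arguments.

Lemma pset_ext (Omega : Type) (E F : pset Omega) :
  (forall w, E w <-> F w) -> E = F.
Proof.
  intros HEF. apply functional_extensionality; intros w.
  apply propositional_extensionality, HEF.
Qed.

Lemma down1_iff (Omega : Type) (le : Omega -> Omega -> Prop) (v w : Omega) :
  down1 le v w <-> le w v.
Proof.
  split.
  - intros [x [-> Hwx]]. exact Hwx.
  - intros Hwv. exists v. split; [reflexivity | exact Hwv].
Qed.

Section RegularOpens.

Variables (Omega : Type) (le : Omega -> Omega -> Prop).
Hypothesis le_refl : forall w, le w w.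
Hypothesis le_trans : forall u v w, le u v -> le v w -> le u w.

Implicit Types E F G : pset Omega.

Definition down_closed E : Prop := forall w w', le w' w -> E w -> E w'.

Lemma RO_down_closed E : RO le E -> down_closed E.
Proof.
  intros HE w w' Hw'w Hw. apply HE. apply HE in Hw.
  intros x Hxw'. apply Hw. eauto.
Qed.

Lemma negs_down_closed E : down_closed (negs le E).
Proof. intros w w' Hw'w Hw x Hxw'. apply Hw. eauto. Qed.

Lemma subset_rho E : subset E (rho le E).
Proof.
  intros w Hw w' Hw'w. exists w'. split; [apply le_refl |].
  exists w. split; assumption.
Qed.

Lemma rho_mono E F : subset E F -> subset (rho le E) (rho le F).
Proof.
  intros HEF w Hw w' Hw'w.
  destruct (Hw w' Hw'w) as [w'' [Hw''w' [x [Hx Hw''x]]]].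
  exists w''. split; [assumption |]. exists x. split; auto.
Qed.

Lemma negs_negs_down_closed E : down_closed E -> negs le (negs le E) = rho le E.
Proof.
  intros HE. apply pset_ext; intros w. split.
  - intros Hw w' Hw'w.
    destruct (classic (exists w'', le w'' w' /\ E w'')) as [[w'' [Hw''w' Hw'']] | Hnone].
    + exists w''. split; [assumption |]. exists w''. split; auto.
    + exfalso. apply (Hw w' Hw'w). intros w'' Hw''w' Hw''. eauto.
  - intros Hw w' Hw'w Hnw'.
    destruct (Hw w' Hw'w) as [w'' [Hw''w' [x [Hx Hw''x]]]].
    apply (Hnw' w'' Hw''w'). exact (HE x w'' Hw''x Hx).
Qed.

Lemma negs_negs_RO E : RO le E -> negs le (negs le E) = E.
Proof.
  intros HE. rewrite negs_negs_down_closed by (apply RO_down_closed; exact HE).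
  apply pset_ext, HE.
Qed.

Lemma negs_union E F : negs le (union E F) = inter (negs le E) (negs le F).
Proof.
  apply pset_ext; intros w. split.
  - intros Hw. split; intros w' Hw'w Hw'; apply (Hw w' Hw'w); [left | right]; exact Hw'.
  - intros [HwE HwF] w' Hw'w [Hw' | Hw']; [apply (HwE w') | apply (HwF w')]; assumption.
Qed.

Lemma joins_as_negs E F :
  down_closed E -> down_closed F -> joins le E F = negs le (inter (negs le E) (negs le F)).
Proof.
  intros HE HF. rewrite <- negs_union, negs_negs_down_closed; [reflexivity |].
  intros w w' Hw'w [Hw | Hw]; [left; exact (HE w w' Hw'w Hw) | right; exact (HF w w' Hw'w Hw)].
Qed.

Lemma negs_inter E F :
  RO le E -> RO le F -> negs le (inter E F) = joins le (negs le E) (negs le F).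
Proof.
  intros HE HF. rewrite joins_as_negs by apply negs_down_closed.
  rewrite !negs_negs_RO by assumption. reflexivity.
Qed.

Lemma subset_joins_l E F : subset E (joins le E F).
Proof. intros w Hw. apply subset_rho. left. exact Hw. Qed.

Lemma subset_joins_r E F : subset F (joins le E F).
Proof. intros w Hw. apply subset_rho. right. exact Hw. Qed.

Lemma joins_least E F G :
  RO le G -> subset E G -> subset F G -> subset (joins le E F) G.
Proof.
  intros HG HEG HFG w Hw. apply HG. revert w Hw.
  apply rho_mono. intros w [Hw | Hw]; auto.
Qed.

Lemma inter_joins_distr E F G :
  RO le E -> down_closed F -> down_closed G ->
  inter E (joins le F G) = joins le (inter E F) (inter E G).
Proof.
  intros HE HF HG. apply pset_ext; intros w. split.
  - intros [HwE HwFG] w' Hw'w.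
    destruct (HwFG w' Hw'w) as [w'' [Hw''w' [x [Hx Hw''x]]]].
    assert (Hw''E : E w'') by (apply (RO_down_closed HE (le_trans Hw''w' Hw'w) HwE)).
    exists w''. split; [assumption |]. exists w''. split; [| apply le_refl].
    destruct Hx as [Hx | Hx]; [left | right]; split; eauto.
  - intros Hw. split.
    + apply HE. revert w Hw. apply rho_mono. intros w [[Hw _] | [Hw _]]; exact Hw.
    + revert w Hw. apply rho_mono. intros w [[_ Hw] | [_ Hw]]; [left | right]; exact Hw.
Qed.

Lemma inter_negs E : inter E (negs le E) = @emptyset Omega.
Proof.
  apply pset_ext; intros w. split; [| intros []].
  intros [Hw Hnw]. exact (Hnw w (le_refl w) Hw).
Qed.

Lemma negs_emptyset : negs le (@emptyset Omega) = @fullset Omega.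
Proof. apply pset_ext; intros w. split; [intros _; exact I | intros _ w' _ []]. Qed.

Lemma joins_negs E : joins le E (negs le E) = @fullset Omega.
Proof.
  apply pset_ext; intros w. split; [intros _; exact I |]. intros _ w' _.
  destruct (classic (exists w'', le w'' w' /\ E w'')) as [[w'' [Hw''w' Hw'']] | Hnone].
  - exists w''. split; [assumption |]. exists w''. split; [left; exact Hw'' | apply le_refl].
  - exists w'. split; [apply le_refl |]. exists w'. split; [| apply le_refl].
    right. intros w'' Hw''w' Hw''. eauto.
Qed.

Theorem boolean_algebra_RO_family (Ecal : pset Omega -> Prop) :
  (forall E, Ecal E -> RO le E) -> (exists E, Ecal E) ->
  (forall E F, Ecal E -> Ecal F -> Ecal (inter E F)) ->
  (forall E, Ecal E -> Ecal (negs le E)) ->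
  boolean_algebra_on Ecal (@subset Omega) (@inter Omega) (joins le) (negs le)
    (@emptyset Omega) (@fullset Omega).
Proof.
  intros E_RO [E0 HE0] E_inter E_negs.
  assert (E_dc : forall E, Ecal E -> down_closed E)
    by (intros E HE; apply RO_down_closed, E_RO, HE).
  assert (E_empty : Ecal (@emptyset Omega))
    by (rewrite <- (inter_negs E0); auto).
  assert (E_full : Ecal (@fullset Omega))
    by (rewrite <- negs_emptyset; auto).
  assert (E_joins : forall E F, Ecal E -> Ecal F -> Ecal (joins le E F))
    by (intros E F HE HF; rewrite joins_as_negs; auto).
  unfold boolean_algebra_on. repeat match goal with |- _ /\ _ => split end.
  - exact E_empty.
  - exact E_full.
  - exact E_inter.
  - exact E_joins.
  - exact E_negs.
  - intros E _ w Hw. exact Hw.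
  - intros E F G _ _ _ HEF HFG w Hw. auto.
  - intros E F _ _ HEF HFE. apply pset_ext; intros w; split; auto.
  - intros E F _ _. split; intros w [HwE HwF]; assumption.
  - intros E F G _ _ _ HGE HGF w Hw. split; auto.
  - intros E F _ _. split; [apply subset_joins_l | apply subset_joins_r].
  - intros E F G _ _ HG. apply joins_least, E_RO, HG.
  - intros E _. split; [intros w [] | intros w _; exact I].
  - intros E F G HE HF HG. apply inter_joins_distr; auto.
  - intros E _. split; [apply inter_negs | apply joins_negs].
Qed.

End RegularOpens.

Section Awareness.

Variables (Omega : Type) (le : Omega -> Omega -> Prop).
Variables (Ecal : pset Omega -> Prop) (Acal : Omega -> Omega -> Prop).
Hypothesis le_refl : forall w, le w w.
Hypothesis le_trans : forall u v w, le u v -> le v w -> le u w.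
Hypothesis le_antisym : forall u v, le u v -> le v u -> u = v.
Hypothesis E_RO : forall E, Ecal E -> RO le E.
Hypothesis E_inter : forall E F, Ecal E -> Ecal F -> Ecal (inter E F).
Hypothesis E_negs : forall E, Ecal E -> Ecal (negs le E).
Hypothesis E_quasi_principal : quasi_principal le Ecal.
Hypothesis E_down1 : forall w v, Acal w v -> Ecal (down1 le v).
Hypothesis A_joins : forall w v E F, Acal w v -> Ecal E -> Ecal F ->
  (forall u, union (maxs le (inter E (down1 le v))) (maxs le (inter F (down1 le v))) u ->
     Acal w u) ->
  (forall u, maxs le (inter (joins le E F) (down1 le v)) u -> Acal w u).

Implicit Types E F : pset Omega.

(* The only maximal point of down1 v is v itself, by antisymmetry. *)
Lemma boldA_fullset : boldA le Acal (@fullset Omega) = @fullset Omega.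
Proof.
  apply pset_ext; intros w. split; [intros _; exact I |].
  intros _ w' _ v Hv u [[[_ Huv] Hmax] | [[Hnu _] _]].
  - rewrite down1_iff in Huv.
    replace u with v; [exact Hv |]. apply le_antisym; [| exact Huv].
    apply NNPP. intros Hvu. apply Hmax. exists v.
    repeat split; [apply down1_iff, le_refl | exact Huv | exact Hvu].
  - destruct (Hnu u (le_refl u) I).
Qed.

Lemma boldA_negs E : RO le E -> boldA le Acal E = boldA le Acal (negs le E).
Proof.
  intros HE. unfold boldA. rewrite (negs_negs_RO le_refl le_trans HE).
  apply pset_ext; intros w. split;
    intros Hw w' Hw'w v Hv u Hu; apply (Hw w' Hw'w v Hv u);
    destruct Hu as [Hu | Hu]; [right | left | right | left]; exact Hu.
Qed.

Lemma maxs_inter_down1_below E F v v' u :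
  down_closed le E -> inter E (down1 le v) v' -> le u v' ->
  maxs le (inter (inter E F) (down1 le v)) u -> maxs le (inter F (down1 le v')) u.
Proof.
  intros HE [Hv'E Hv'v] Huv' [[[_ HuF] _] Hmax]. rewrite down1_iff in Hv'v.
  split; [split; [exact HuF | apply down1_iff, Huv'] |].
  intros [x [[HxF Hxv'] [Hux Hxu]]]. rewrite down1_iff in Hxv'.
  apply Hmax. exists x. repeat split; eauto.
  apply down1_iff. eauto.
Qed.

Lemma boldA_inter E F : Ecal E -> Ecal F ->
  subset (inter (boldA le Acal E) (boldA le Acal F)) (boldA le Acal (inter E F)).
Proof.
  intros HE HF w [HwE HwF] w' Hw'w v Hv u [Hu | Hu].
  - assert (HuEv : inter E (down1 le v) u)
      by (destruct Hu as [[[HuE _] Huv] _]; split; assumption).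
    destruct (E_quasi_principal u (E_inter HE (E_down1 Hv)) HuEv) as [v' [Hv'max Huv']].
    apply (HwF w' Hw'w v' (HwE w' Hw'w v Hv v' (or_introl Hv'max)) u). left.
    apply (maxs_inter_down1_below (RO_down_closed le_trans (E_RO HE)) (proj1 Hv'max) Huv' Hu).
  - rewrite (negs_inter le_refl le_trans (E_RO HE) (E_RO HF)) in Hu.
    apply (A_joins Hv (E_negs HE) (E_negs HF)); [| exact Hu].
    intros u' [Hu' | Hu']; [apply (HwE w' Hw'w v Hv u') | apply (HwF w' Hw'w v Hv u')];
      right; exact Hu'.
Qed.

Lemma boldK_inter (R : Omega -> Omega -> Prop) E F : Ecal E -> Ecal F ->
  subset (inter (boldK le Acal R E) (boldK le Acal R F)) (boldK le Acal R (inter E F)).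
Proof.
  intros HE HF w [[HwRE HwE] [HwRF HwF]]. split.
  - intros u Hu. split; auto.
  - apply boldA_inter; [assumption | assumption | split; assumption].
Qed.

Lemma boldK_mono (R : Omega -> Omega -> Prop) E F : subset E F ->
  subset (inter (boldK le Acal R E) (boldA le Acal F)) (boldK le Acal R F).
Proof.
  intros HEF w [[HwR _] HwF]. split; [| exact HwF].
  intros u Hu. apply HEF, HwR, Hu.
Qed.

Lemma boldK_closed (R : Omega -> Omega -> Prop) E :
  (forall E, Ecal E -> Ecal (fun w => subset (R w) E)) ->
  (forall E, Ecal E -> Ecal (boldA le Acal E)) ->
  Ecal E -> Ecal (boldK le Acal R E).
Proof. intros R_closed A_closed HE. exact (E_inter (R_closed E HE) (A_closed E HE)). Qed.

Lemma boldK_fullset (R : Omega -> Omega -> Prop) :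
  boldK le Acal R (@fullset Omega) = @fullset Omega.
Proof.
  apply pset_ext; intros w. split; [intros _; exact I | intros _].
  split; [intros u _; exact I | rewrite boldA_fullset; exact I].
Qed.

Lemma boldK_subset_of_refl (R : Omega -> Omega -> Prop) E :
  (forall w, R w w) -> subset (boldK le Acal R E) E.
Proof. intros R_refl w [HwR _]. exact (HwR w (R_refl w)). Qed.

Lemma boldK_emptyset_of_serial (R : Omega -> Omega -> Prop) :
  (forall w, exists u, R w u) -> boldK le Acal R (@emptyset Omega) = @emptyset Omega.
Proof.
  intros R_serial. apply pset_ext; intros w. split; [intros [HwR _] | intros []].
  destruct (R_serial w) as [u Hu]. exact (HwR u Hu).
Qed.

Lemma boldK_subset_rel (R R' : Omega -> Omega -> Prop) E :
  (forall w, subset (R' w) (R w)) -> subset (boldK le Acal R E) (boldK le Acal R' E).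
Proof.
  intros HR'R w [HwR HwA]. split; [| exact HwA].
  intros u Hu. apply HwR, HR'R, Hu.
Qed.

Lemma boldK_subset_boldA (R : Omega -> Omega -> Prop) E :
  subset (boldK le Acal R E) (boldA le Acal E).
Proof. intros w [_ HwA]. exact HwA. Qed.

End Awareness.

Theorem proposition4p3 (Omega : Type) (le : Omega -> Omega -> Prop)
  (Ecal : pset Omega -> Prop) (Acal Kc Bc : Omega -> Omega -> Prop) :
  epistemic_frame le Ecal Acal Kc Bc ->
  epistemic_awareness_algebra_on Ecal (@subset Omega)
    (@inter Omega) (joins le) (negs le) (@emptyset Omega) (@fullset Omega)
    (boldA le Acal) (boldK le Acal Kc) (boldB le Acal Bc).
Proof.
  intros [[[[le_refl [le_trans le_antisym]] [E_RO [E_nonempty [E_inter E_negs]]]]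
           [E_qp [_ [E_down1 [_ [_ [A_joins A_closed]]]]]]]
          [[_ [_ [_ K_closed]]] [[_ [_ [_ B_closed]]] [K_refl [B_serial B_sub_K]]]]].
  unfold epistemic_awareness_algebra_on. change (boldB le Acal Bc) with (boldK le Acal Bc).
  split; [apply boolean_algebra_RO_family; assumption |].
  split; [intros E HE; split; [| split; apply boldK_closed]; auto |].
  split; [apply boldA_fullset; assumption |].
  split; [intros E HE; apply boldA_negs; auto |].
  split; [intros E F HE HF; apply boldA_inter with Ecal; auto |].
  split; [apply boldK_fullset; assumption |].
  split.
  { intros Box [-> | ->];
      (split; [intros E F HE HF; apply boldK_inter with Ecal; auto
              | intros E F _ _; apply boldK_mono]). }
  split; [intros E _; apply boldK_subset_of_refl, K_refl |].
  split; [apply boldK_emptyset_of_serial, B_serial |].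
  split; [intros E _; apply boldK_subset_rel, B_sub_K |].
  intros E _. apply boldK_subset_boldA.
Qed.
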